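(* Assume $r(x,y)>0$ for all distinct $x,y\in S$. For all $N$, $k\in\{0,1,\dots,N-1\}$ and $x\in S$, $$\mu_N(\mathcal C_N^S(x,k+1))\le\frac{R_2(k+d_N)(N-k)}{R_1(k+1)(N-k-1+d_N)}\,\mu_N(\mathcal C_N^S(x,k)),$$ where $\mathcal C_N^S(x,k)=\{\eta\in\mathcal H_N:\eta_x=k\}$, $R_1=\min\{r(a,b):a,b\in S,\ r(a,b)>0\}$ and $R_2=\max\{r(a,b):a,b\in S\}$.
   Context: $S$ is a finite set, $r:S\times S\to[0,\infty)$ with $r(x,x)=0$. $\mathcal H_N=\{\eta\in\{0,1,2,\dots\}^S:\sum_x\eta_x=N\}$; $\sigma^{x,y}\eta$ moves one particle from $x$ to $y$ (if $\eta_x\ge1$; else $\sigma^{x,y}\eta=\eta$). With $d_N>0$, the inclusion process is the continuous-time Markov chain on $\mathcal H_N$ with generator $(\mathcal L_NF)(\eta)=\sum_{x\ne y}\eta_x(d_N+\eta_y)r(x,y)\{F(\sigma^{x,y}\eta)-F(\eta)\}$, and $\mu_N$ is its unique invariant probability measure. *)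

From HB Require Import structures.
From mathcomp Require Import all_boot all_order all_algebra.
Set Implicit Arguments. Unset Strict Implicit. Unset Printing Implicit Defensive.
Import Order.TTheory GRing.Theory Num.Theory.
Local Open Scope ring_scope.

Section Inclusion.
Variables (R : realFieldType) (S : finType).

(* configurations: particle counts eta : S -> nat *)
Definition config := {ffun S -> nat}.

(* H_N, enumerated (without duplicates) as a sequence *)
Definition Hseq (N : nat) : seq config :=
  map (fun e : {ffun S -> 'I_N.+1} => [ffun z => nat_of_ord (e z)])
    (enum [pred e : {ffun S -> 'I_N.+1} |
             (\sum_(z : S) nat_of_ord (e z))%N == N]).

Definition sigma (x y : S) (eta : config) : config :=
  if (0 < eta x)%N then
    [ffun z => if z == x then (eta x).-1
               else if z == y then (eta y).+1 else eta z]
  else eta.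

Definition gen (dN : R) (r : S -> S -> R) (F : config -> R) (eta : config) : R :=
  \sum_(x : S) \sum_(y : S | y != x)
     (eta x)%:R * (dN + (eta y)%:R) * r x y * (F (sigma x y eta) - F eta).

Definition invariant_prob (N : nat) (dN : R) (r : S -> S -> R)
    (mu : config -> R) : Prop :=
  [/\ forall eta, eta \in Hseq N -> 0 <= mu eta,
      \sum_(eta <- Hseq N) mu eta = 1 &
      forall F : config -> R, \sum_(eta <- Hseq N) mu eta * gen dN r F eta = 0].

Definition muC (N : nat) (mu : config -> R) (x : S) (k : nat) : R :=
  \sum_(eta <- Hseq N | eta x == k) mu eta.

(* R_2 = max_{a,b} r(a,b)  (r >= 0 and r(a,a) = 0, so 0 is a valid seed) *)
Definition R2 (r : S -> S -> R) : R :=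
  \big[Num.max/0]_(ab : S * S) r ab.1 ab.2.

(* R_1 = min{ r(a,b) : r(a,b) > 0 }; the seed R2 is >= every r(a,b), so this
   is the true minimum whenever some r(a,b) > 0 *)
Definition R1 (r : S -> S -> R) : R :=
  \big[Num.min/R2 r]_(ab : S * S | 0 < r ab.1 ab.2) r ab.1 ab.2.

End Inclusion.

(* Test the invariance of mu against the indicator F of {eta_x > k}.  The
   generator applied to F only sees jumps into x from configurations with
   eta_x = k, at total rate at most R2 (k + d_N) (N - k), and jumps out of x
   from configurations with eta_x = k + 1, at total rate at least
   R1 (k + 1) (N - k - 1 + d_N), the d_N coming from any one other site.
   Since mu (L_N F) = 0, the flux into C(x, k + 1) from C(x, k) balances the
   flux out of it, and comparing the two rates gives the inequality. *)

From HB Require Import structures.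
From mathcomp Require Import all_boot all_order all_algebra.
From mathcomp Require Import zify lra.
Set Implicit Arguments. Unset Strict Implicit. Unset Printing Implicit Defensive.
Import Order.TTheory GRing.Theory Num.Theory.
Local Open Scope ring_scope.

Lemma card_gt1_exists_neq (T : finType) (x : T) : (1 < #|T|)%N -> exists y, y != x.
Proof. by rewrite -ltn_predRL -(cardC1 x) => /card_gt0P[y]; exists y. Qed.

Section OffDiagonalSums.
Variables (V : nmodType) (T : finType) (z : T) (f : T -> T -> V).

Lemma sum_offdiag_col :
  \sum_a \sum_(b | b != a) (if b == z then f a b else 0) = \sum_(a | a != z) f a z.
Proof.
rewrite [RHS]big_mkcond; apply: eq_bigr => a _.
have [->|naz] := eqVneq a z; first by rewrite big1 // => b /negPf ->.
rewrite (bigD1 z) 1?eq_sym //= eqxx big1 ?addr0 // => b /andP[_ /negPf ->] //.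
Qed.

Lemma sum_offdiag_row :
  \sum_a \sum_(b | b != a) (if a == z then f a b else 0) = \sum_(b | b != z) f z b.
Proof.
rewrite (bigD1 z) //= eqxx [X in _ + X]big1 ?addr0 // => a /negPf ->.
by rewrite big1.
Qed.

End OffDiagonalSums.

Section InclusionProcess.
Variables (R : realFieldType) (S : finType) (r : S -> S -> R).

Lemma r_le_R2 a b : r a b <= R2 r.
Proof. by rewrite /R2 (bigD1 (a, b)) //= le_max lexx. Qed.

Lemma R1_le_r {a b} : 0 < r a b -> R1 r <= r a b.
Proof. by move=> rab; rewrite /R1 (bigD1 (a, b)) //= ge_min lexx. Qed.

Lemma R1_gt0 {a b} : 0 < r a b -> 0 < R1 r.
Proof.
move=> rab; apply: (big_ind (fun v => 0 < v)) => [|u v u0 v0|[i j] //].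
- exact: lt_le_trans rab (r_le_R2 a b).
- by rewrite lt_min u0 v0.
Qed.

Lemma sum_Hseq {N} {eta : config S} : eta \in Hseq S N -> (\sum_z eta z)%N = N.
Proof.
case/mapP=> e; rewrite mem_enum inE => /eqP sumN ->.
by rewrite -[RHS]sumN; apply: eq_bigr => z _; rewrite ffunE.
Qed.

Lemma sum_Hseq_off {N} {eta : config S} z : eta \in Hseq S N ->
  \sum_(a | a != z) (eta a)%:R = (N - eta z)%:R :> R.
Proof.
move=> /sum_Hseq; rewrite (bigD1 z) //= => sumN.
by rewrite -natr_sum; congr (_%:R); lia.
Qed.

Definition indic_gt (z : S) (k : nat) (eta : config S) : R :=
  if (k < eta z)%N then 1 else 0.

Lemma indic_gt_sigma z k a b (eta : config S) : a != b ->
  indic_gt z k (sigma a b eta) - indic_gt z k eta =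
  (if [&& b == z, eta z == k & (0 < eta a)%N] then 1 else 0)
  - (if (a == z) && (eta z == k.+1) then 1 else 0).
Proof.
move=> nab; rewrite /indic_gt /sigma.
have [ea0|] := posnP (eta a).
  rewrite !andbF subrr sub0r; have [az|_] := eqVneq a z; last by rewrite oppr0.
  by rewrite -az ea0 andbF oppr0.
move=> ea_gt0; rewrite ffunE andbT.
have [az|naz] := eqVneq a z.
  rewrite -az [b == a]eq_sym (negPf nab) /= sub0r.
  case: eqP => [->|neq]; first by rewrite ltnn ltnSn sub0r.
  have -> : (k < (eta a).-1)%N = (k < eta a)%N by apply/idP/idP; lia.
  by rewrite subrr oppr0.
rewrite /= subr0; have [bz|nbz] := eqVneq b z; last first.
  by rewrite subrr.
rewrite bz /=; case: eqP => [->|neq]; first by rewrite ltnSn ltnn subr0.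
have -> : (k < (eta z).+1)%N = (k < eta z)%N by apply/idP/idP; lia.
by rewrite subrr.
Qed.

Definition inflow (dN : R) (z : S) (eta : config S) : R :=
  \sum_(a | a != z) (eta a)%:R * (dN + (eta z)%:R) * r a z.

Definition outflow (dN : R) (z : S) (eta : config S) : R :=
  \sum_(b | b != z) (eta z)%:R * (dN + (eta b)%:R) * r z b.

Lemma gen_indic_gt dN z k (eta : config S) :
  gen dN r (indic_gt z k) eta =
  (if eta z == k then inflow dN z eta else 0)
  - (if eta z == k.+1 then outflow dN z eta else 0).
Proof.
have termE a b : b != a ->
    (eta a)%:R * (dN + (eta b)%:R) * r a b
      * (indic_gt z k (sigma a b eta) - indic_gt z k eta) =
    (if b == z then (eta a)%:R * (dN + (eta b)%:R) * r a b
                    * (if eta z == k then 1 else 0) else 0)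
    - (if a == z then (eta a)%:R * (dN + (eta b)%:R) * r a b
                      * (if eta z == k.+1 then 1 else 0) else 0).
  move=> nba; have nab : a != b by rewrite eq_sym.
  rewrite indic_gt_sigma // mulrBr.
  have [ea0|_] := posnP (eta a).
    by rewrite ea0 mulr0n !mul0r !if_same.
  by rewrite andbT; case: (b == z); case: (a == z); rewrite /= ?mulr0.
rewrite /gen.
under eq_bigr => a _ do rewrite (eq_bigr _ (termE a)) sumrB.
rewrite sumrB sum_offdiag_col sum_offdiag_row -!mulr_suml.
rewrite -/(inflow dN z eta) -/(outflow dN z eta).
by rewrite !(fun_if (GRing.mul _)) !mulr1 !mulr0.
Qed.

Lemma inflow_le dN N z (eta : config S) : 0 <= dN -> eta \in Hseq S N ->
  inflow dN z eta <= R2 r * ((eta z)%:R + dN) * (N - eta z)%:R.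
Proof.
move=> dN_ge0 etaN; rewrite /inflow -(sum_Hseq_off z etaN) mulr_sumr.
apply: ler_sum => a _.
have rate_ge0 : 0 <= (eta a)%:R * (dN + (eta z)%:R) by rewrite mulr_ge0 ?addr_ge0.
have := ler_wpM2l rate_ge0 (r_le_R2 a z); lra.
Qed.

Lemma outflow_ge dN N z y (eta : config S) :
  0 <= dN -> y != z -> (forall b, b != z -> 0 < r z b) -> eta \in Hseq S N ->
  R1 r * (eta z)%:R * ((N - eta z)%:R + dN) <= outflow dN z eta.
Proof.
move=> dN_ge0 yz rz_gt0 etaN.
have R1_ge0 : 0 <= R1 r := ltW (R1_gt0 (rz_gt0 y yz)).
have sum_ge : (N - eta z)%:R + dN <= \sum_(b | b != z) (dN + (eta b)%:R).
  rewrite big_split /= (sum_Hseq_off z etaN) addrC lerD2l (bigD1 y) //= lerDl.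
  by apply: sumr_ge0.
apply: le_trans (ler_wpM2l (mulr_ge0 R1_ge0 (ler0n _ _)) sum_ge) _.
rewrite mulr_sumr; apply: ler_sum => b bz.
have rate_ge0 : 0 <= (eta z)%:R * (dN + (eta b)%:R) by rewrite mulr_ge0 ?addr_ge0.
have := ler_wpM2l rate_ge0 (R1_le_r (rz_gt0 b bz)); lra.
Qed.

Lemma invariant_flux_balance N dN mu z k : invariant_prob N dN r mu ->
  \sum_(eta <- Hseq S N | eta z == k.+1) mu eta * outflow dN z eta =
  \sum_(eta <- Hseq S N | eta z == k) mu eta * inflow dN z eta.
Proof.
case=> _ _ /(_ (indic_gt z k)).
under eq_bigr do rewrite gen_indic_gt mulrBr !(fun_if (GRing.mul _)) !mulr0.
by rewrite sumrB -!big_mkcond => /eqP; rewrite subr_eq0 eq_sym => /eqP.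
Qed.

End InclusionProcess.

Theorem lemma7p5 (R : realFieldType) (S : finType) (r : S -> S -> R)
    (d : nat -> R) :
  (1 < #|S|)%N ->
  (forall x, r x x = 0) ->
  (forall x y, x != y -> 0 < r x y) ->
  (forall N, 0 < d N) ->
  forall (N : nat) (mu : config S -> R),
    invariant_prob N (d N) r mu ->
    forall (k : nat), (k < N)%N -> forall x : S,
      muC N mu x k.+1 <=
        (R2 r * (k%:R + d N) * (N - k)%:R)
          / (R1 r * k.+1%:R * ((N - k - 1)%:R + d N))
        * muC N mu x k.
Proof.
(* The diagonal rates never enter the generator. *)
move=> S_gt1 _ r_gt0 d_gt0 N mu mu_inv k k_lt_N x.
have [y yx] := card_gt1_exists_neq x S_gt1.
have rx_gt0 b : b != x -> 0 < r x b by rewrite eq_sym; apply: r_gt0.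
have dN_ge0 := ltW (d_gt0 N).
have [mu_ge0 _ _] := mu_inv.
set A := R1 r * k.+1%:R * ((N - k - 1)%:R + d N).
set B := R2 r * (k%:R + d N) * (N - k)%:R.
have A_gt0 : 0 < A.
  by rewrite !mulr_gt0 ?ltr0Sn ?ltr_wpDl //; exact: R1_gt0 (rx_gt0 y yx).
rewrite mulrAC ler_pdivlMr // /muC mulr_suml mulr_sumr.
have outflow_bound :
    \sum_(eta <- Hseq S N | eta x == k.+1) mu eta * A <=
    \sum_(eta <- Hseq S N | eta x == k.+1) mu eta * outflow r (d N) x eta.
  rewrite big_seq_cond [X in _ <= X]big_seq_cond.
  apply: ler_sum => eta /andP[etaN /eqP etax].
  rewrite ler_wpM2l ?mu_ge0 // /A subn1 -subnS -etax.
  exact: outflow_ge dN_ge0 yx rx_gt0 etaN.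
apply: le_trans outflow_bound _; rewrite invariant_flux_balance //.
rewrite big_seq_cond [X in _ <= X]big_seq_cond.
apply: ler_sum => eta /andP[etaN /eqP etax].
rewrite mulrC ler_wpM2r ?mu_ge0 // /B -etax.
exact: inflow_le dN_ge0 etaN.
Qed.
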